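(* For every $\varepsilon>0$, every positive integer $k$ and every positive integer $L$ there is a number $M=M(\varepsilon,k,L)$ such that the following holds: every sufficiently long word $w\in[k]^n$ can be partitioned into at most $M$ subwords (consecutive blocks) such that the total length of those subwords that are not $(\varepsilon,L)$-regular is at most $\varepsilon n$.
   Context: $[k]=\{1,\dots,k\}$. A subword of a word $w$ is a word consisting of consecutive letters of $w$. For a word $w$ of length $n$ and a word $u$ of length $l<n$, the frequency $f_w(u)$ is the probability that a uniformly randomly chosen subword of $w$ of length $l$ (i.e., one of the $n-l+1$ such subwords, chosen uniformly) equals $u$. A word $w\in[k]^n$ is $(\varepsilon,L)$-regular if for every subword $w'$ of $w$ of length at least $\varepsilon n$ we have $|f_w(u)-f_{w'}(u)|<\varepsilon$ for every word $u$ of length at most $L$. *)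

From HB Require Import structures.
From mathcomp Require Import all_boot all_order all_algebra.
From mathcomp Require Import boolp reals.
Set Implicit Arguments. Unset Strict Implicit. Unset Printing Implicit Defensive.
Import Order.TTheory GRing.Theory Num.Theory.
Local Open Scope ring_scope.

Definition subword {T : Type} (w : seq T) (i l : nat) : seq T := take l (drop i w).

(* f_w(u): fraction of the (size w - size u + 1) subwords of w of length
   size u that equal u. (Used only when size u < size w.) *)
Definition freq {R : realType} {k : nat} (w u : seq 'I_k) : R :=
  (\sum_(0 <= i < (size w - size u).+1) ((subword w i (size u) == u) : nat)%:R)
  / ((size w - size u).+1)%:R.

Definition regular {R : realType} {k : nat} (eps : R) (L : nat) (w : seq 'I_k) : Prop :=
  forall i l : nat, (i + l <= size w)%N -> eps * (size w)%:R <= l%:R ->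
  forall u : seq 'I_k, (0 < size u <= L)%N -> (size u < l)%N ->
    `| freq (R := R) w u - freq (R := R) (subword w i l) u | < eps.

(* Give a block [s, s + m) of w the energy sum_u c(u)^2 / m, where u
   ranges over the nonempty words of length at most L and c(u) counts the occurrences of u
   starting in the block; it lies between 0 and K m, with K the number of such u.  By
   Cauchy-Schwarz the energy never drops when a block is cut into pieces.  A long irregular
   block contains a sub-block of relative length at least eps on which the density of some u
   is off by eps/2, and cutting the block into three pieces around it gains (eps/2)^3 m.
   Cutting every long irregular block at once, as long as they cover more than eps n / 2
   letters, gains (eps/2)^4 n per round, so this stops after t rounds with t (eps/2)^4 > K,
   leaving at most 3^t blocks; the short ones cover at most S 3^t <= eps n / 2 letters once
   n is large. *)

From HB Require Import structures.
From mathcomp Require Import all_boot all_order all_algebra.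
From mathcomp Require Import boolp reals.
From mathcomp Require Import zify ring lra.
Import Order.TTheory GRing.Theory Num.Theory.
Local Open Scope ring_scope.

Section EnergyIncrement.
Variables (R : realType) (energy : nat -> nat -> R) (bad : nat -> nat -> bool).
Variables (K c : R).
Hypothesis c_ge0 : 0 <= c.
Hypothesis energy_ge0 : forall s m, 0 <= energy s m.
Hypothesis energy_le : forall s m, energy s m <= K * m%:R.
Hypothesis energy_split : forall s m, bad s m -> exists i l, (i + l <= m)%N /\
  energy s m + c * m%:R <= energy s i + energy (s + i)%N l + energy (s + i + l)%N (m - i - l).

Fixpoint partition_energy s (P : seq nat) : R :=
  if P is m :: P' then energy s m + partition_energy (s + m)%N P' else 0.

Fixpoint bad_mass s (P : seq nat) : nat :=
  if P is m :: P' then ((if bad s m then m else 0) + bad_mass (s + m) P')%N else 0%N.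

Lemma partition_energy_ge0 s P : 0 <= partition_energy s P.
Proof. by elim: P s => [|m P IH] s //=; rewrite addr_ge0. Qed.

Lemma partition_energy_le s P : partition_energy s P <= K * (sumn P)%:R.
Proof.
elim: P s => [|m P IH] s /=; first by rewrite mulr0.
by rewrite natrD mulrDr lerD.
Qed.

Lemma bad_mass_le s P : (bad_mass s P <= sumn P)%N.
Proof. elim: P s => [|m P IH] s //=; case: (bad s m); have := IH (s + m)%N; lia. Qed.

Lemma refine_partition s P : exists P', [/\ sumn P' = sumn P, (size P' <= 3 * size P)%N &
  partition_energy s P + c * (bad_mass s P)%:R <= partition_energy s P'].
Proof.
elim: P s => [|m P IH] s /=; first by exists [::]; rewrite mulr0 addr0.
have [Q [sumQ sizeQ energyQ]] := IH (s + m)%N.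
case bad_sm: (bad s m); last first.
  by exists (m :: Q); split => /=; rewrite ?sumQ //; [lia | lra].
have [i [l [il_le_m split_gain]]] := energy_split _ _ bad_sm.
exists [:: i, l, (m - i - l)%N & Q]; split => /=; rewrite ?sumQ; [lia | lia | idtac].
rewrite (_ : (s + i + l + (m - i - l))%N = (s + m)%N); last by lia.
rewrite natrD mulrDr; lra.
Qed.

(* Each round either leaves little bad mass or raises the energy by [c * eta * n]. *)
Lemma iterate_refinement (eta : R) n t : 0 <= eta -> exists P,
  [/\ sumn P = n, (size P <= 3 ^ t)%N &
      (bad_mass 0 P)%:R <= eta * n%:R \/ t%:R * c * eta * n%:R <= partition_energy 0 P].
Proof.
move=> eta_ge0; elim: t => [|t [P [sumP sizeP progress]]].
  by exists [:: n]; split; [rewrite /= addn0 | | right; rewrite !mul0r partition_energy_ge0].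
have [small | large] := lerP (bad_mass 0 P)%:R (eta * n%:R).
  by exists P; split => //; [rewrite expnS; lia | left].
have {}progress : t%:R * c * eta * n%:R <= partition_energy 0 P.
  by case: progress => // small; move: large; rewrite ltNge small.
have [Q [sumQ sizeQ energyQ]] := refine_partition 0 P.
exists Q; split; [by rewrite sumQ | by rewrite expnS; lia | right].
have : c * (eta * n%:R) <= c * (bad_mass 0 P)%:R by rewrite ler_wpM2l // ltW.
rewrite -natr1 !mulrDl mul1r -[c * eta * _]mulrA; lra.
Qed.

Lemma energy_increment (eta : R) n t : 0 <= eta -> K < t%:R * c * eta ->
  exists P, [/\ sumn P = n, (size P <= 3 ^ t)%N & (bad_mass 0 P)%:R <= eta * n%:R].
Proof.
move=> eta_ge0 Kt; have [P [sumP sizeP progress]] := iterate_refinement eta n t eta_ge0.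
exists P; split => //; case: progress => // large.
case: n sumP large => [|n] sumP large.
  by have := bad_mass_le 0 P; rewrite sumP leqn0 => /eqP ->; rewrite mulr0.
have := partition_energy_le 0 P; rewrite sumP.
have : K * n.+1%:R < t%:R * c * eta * n.+1%:R by rewrite ltr_pM2r.
lra.
Qed.

End EnergyIncrement.

Section RatioInequalities.
Variable R : realType.
Implicit Types x y z a b p q eta : R.

Lemma sqr_div_add_defect y z p q : 0 < p -> 0 < q ->
  y ^+ 2 / p + z ^+ 2 / q - (y + z) ^+ 2 / (p + q) =
  (y * q - z * p) ^+ 2 / (p * q * (p + q)).
Proof.
move=> p_gt0 q_gt0; have pq_neq0 : p + q != 0 by rewrite lt0r_neq0 // addr_gt0.
by field; rewrite pq_neq0 !lt0r_neq0.
Qed.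

Lemma sqr_div_add_le y z p q : 0 <= y <= p -> 0 <= z <= q ->
  (y + z) ^+ 2 / (p + q) <= y ^+ 2 / p + z ^+ 2 / q.
Proof.
move=> /andP[y_ge0 y_le_p] /andP[z_ge0 z_le_q].
have [p0 | p_neq0] := eqVneq p 0.
  by rewrite p0 (_ : y = 0) ?expr0n /= ?mul0r ?add0r; lra.
have [q0 | q_neq0] := eqVneq q 0.
  by rewrite q0 (_ : z = 0) ?expr0n /= ?mul0r ?addr0; lra.
have p_gt0 : 0 < p by rewrite lt0r p_neq0; lra.
have q_gt0 : 0 < q by rewrite lt0r q_neq0; lra.
rewrite -subr_ge0 sqr_div_add_defect // divr_ge0 ?sqr_ge0 //.
by rewrite !mulr_ge0 ?addr_ge0 // ltW.
Qed.

(* The defect is [p (p + q) d^2 / q], with [d] the gap between the ratio on [p] and the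
   joint ratio. *)
Lemma sqr_div_add_gain y z p q eta : 0 < p -> 0 < q -> 0 <= eta ->
  eta * (p + q) <= p -> eta <= `|y / p - (y + z) / (p + q)| ->
  (y + z) ^+ 2 / (p + q) + eta ^+ 3 * (p + q) <= y ^+ 2 / p + z ^+ 2 / q.
Proof.
move=> p_gt0 q_gt0 eta_ge0 eta_le gap.
set d := y / p - (y + z) / (p + q).
have pq_gt0 : 0 < p + q by rewrite addr_gt0.
rewrite -lerBrDl sqr_div_add_defect //.
have -> : y * q - z * p = p * (p + q) * d by rewrite /d; field; rewrite !lt0r_neq0.
have -> : (p * (p + q) * d) ^+ 2 / (p * q * (p + q)) = p * (p + q) * d ^+ 2 / q.
  by field; rewrite !lt0r_neq0.
have eta_d : eta ^+ 2 <= d ^+ 2.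
  by rewrite -[d ^+ 2]real_normK ?num_real // lerXn2r ?nnegrE.
have : p * d ^+ 2 <= p * (p + q) * d ^+ 2 / q.
  rewrite ler_pdivlMr //.
  by have := mulr_ge0 (mulr_ge0 (ltW p_gt0) (ltW p_gt0)) (sqr_ge0 d); nra.
have : eta ^+ 2 * (eta * (p + q)) <= p * d ^+ 2.
  apply: le_trans (_ : eta ^+ 2 * p <= _); first by rewrite ler_wpM2l ?sqr_ge0.
  by rewrite mulrC ler_wpM2l // ltW.
rewrite mulrA -exprSr; lra.
Qed.

Lemma sqr_div_add3_le x1 x2 x3 a b c : 0 <= x1 <= a -> 0 <= x2 <= b -> 0 <= x3 <= c ->
  (x1 + x2 + x3) ^+ 2 / (a + b + c) <= x1 ^+ 2 / a + x2 ^+ 2 / b + x3 ^+ 2 / c.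
Proof.
move=> x1P x2P x3P; move: (x1P) (x3P) => /andP[? ?] /andP[? ?].
have x13P : 0 <= x1 + x3 <= a + c by apply/andP; split; lra.
have := sqr_div_add_le _ _ _ _ x13P x2P; have := sqr_div_add_le _ _ _ _ x1P x3P.
rewrite (addrAC x1) (addrAC a); lra.
Qed.

Lemma sqr_div_add3_gain x1 x2 x3 a b c eta :
  0 <= x1 <= a -> 0 <= x2 <= b -> 0 <= x3 <= c -> 0 < b -> 0 < eta ->
  eta * (a + b + c) <= b -> eta <= `|x2 / b - (x1 + x2 + x3) / (a + b + c)| ->
  (x1 + x2 + x3) ^+ 2 / (a + b + c) + eta ^+ 3 * (a + b + c) <=
  x1 ^+ 2 / a + x2 ^+ 2 / b + x3 ^+ 2 / c.
Proof.
move=> x1P x2P x3P b_gt0 eta_gt0 eta_le gap; move: (x1P) (x3P) => /andP[? ?] /andP[? ?].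
have [ac0 | ac_neq0] := eqVneq (a + c) 0.
  have [a0 c0] : a = 0 /\ c = 0 by split; lra.
  have [x1_0 x3_0] : x1 = 0 /\ x3 = 0 by split; lra.
  by move: gap; rewrite a0 c0 x1_0 x3_0 !(add0r, addr0) subrr normr0; lra.
have ac_gt0 : 0 < a + c by rewrite lt0r ac_neq0 /=; lra.
have := sqr_div_add_le _ _ _ _ x1P x3P.
have := @sqr_div_add_gain x2 (x1 + x3) b (a + c) eta b_gt0 ac_gt0 (ltW eta_gt0).
have -> : x2 + (x1 + x3) = x1 + x2 + x3 by ring.
have -> : b + (a + c) = a + b + c by ring.
move=> /(_ eta_le gap); lra.
Qed.

Lemma dist_ratio_prefix C A q m : 0 < q -> q <= m -> 0 <= C <= q -> 0 <= A - C <= m - q ->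
  `|C / q - A / m| <= 2 * (m - q) / m.
Proof.
move=> q_gt0 q_le_m /andP[? ?] /andP[? ?]; have m_gt0 : 0 < m by lra.
have -> : C / q - A / m = (C * (m - q) - (A - C) * q) / (q * m).
  by field; rewrite !lt0r_neq0.
rewrite normrM [`|(q * m)^-1|]ger0_norm; last by rewrite invr_ge0 mulr_ge0 // ltW.
rewrite ler_pdivrMr ?mulr_gt0 //.
have -> : 2 * (m - q) / m * (q * m) = 2 * (m - q) * q by field; rewrite lt0r_neq0.
rewrite ler_norml; apply/andP; split; nra.
Qed.

Lemma half_dist_ge a b a' b' e e' eps : eps <= `|a - b| -> `|a - a'| <= e ->
  `|b - b'| <= e' -> e + e' <= eps / 2 -> eps / 2 <= `|a' - b'|.
Proof.
rewrite !ler_norml => + /andP[? ?] /andP[? ?] ?.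
rewrite ler_normr => /orP[] ?; rewrite ler_normr; apply/orP; [left | right]; lra.
Qed.
End RatioInequalities.

Section Occurrences.
Variable k : nat.
Implicit Types (w u v : seq 'I_k) (s m i l : nat).

Definition occurs_at w u j : nat := subword w j (size u) == u.

(* Occurrences are counted in [w] itself, so one starting inside the block may overhang it. *)
Definition occ_count w u s m : nat := \sum_(0 <= j < m) occurs_at w u (s + j).

Lemma occ_countD w u s a b :
  occ_count w u s (a + b) = (occ_count w u s a + occ_count w u (s + a) b)%N.
Proof.
rewrite /occ_count; elim: b => [|b IH].
  by rewrite addn0 [in X in (_ + X)%N]big_geq // addn0.
by rewrite addnS !big_nat_recr //= IH addnA addnA.
Qed.

Lemma occ_count3 w u s i l r : occ_count w u s (i + l + r) =
  (occ_count w u s i + occ_count w u (s + i) l + occ_count w u (s + i + l) r)%N.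
Proof. by rewrite !occ_countD addnA. Qed.

Lemma occ_count_le w u s m : (occ_count w u s m <= m)%N.
Proof.
rewrite /occ_count; elim: m => [|m IH]; first by rewrite big_geq.
by rewrite big_nat_recr //= -addn1 leq_add // /occurs_at leq_b1.
Qed.

Lemma size_subword w s m : (s + m <= size w)%N -> size (subword w s m) = m.
Proof. by move=> sm_le; rewrite /subword size_takel // size_drop; lia. Qed.

Lemma subword_subword w s m i l : (i + l <= m)%N ->
  subword (subword w s m) i l = subword w (s + i) l.
Proof.
move=> il_le_m; rewrite /subword (_ : m = (m - i) + i)%N; last by lia.
by rewrite -take_drop drop_drop take_takel 1?addnC //; lia.
Qed.

Lemma freq_subword (R : realType) w u s m : (s + m <= size w)%N -> (size u <= m)%N ->
  freq (R := R) (subword w s m) u =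
  (occ_count w u s (m - size u).+1)%:R / (m - size u).+1%:R.
Proof.
move=> sm_le u_le; rewrite /freq size_subword //; congr (_ / _).
rewrite /occ_count natr_sum; apply: eq_big_nat => j /andP[_ j_lt].
by rewrite /occurs_at subword_subword //; lia.
Qed.

Definition short_words L : seq (seq 'I_k) :=
  flatten [seq [seq val t | t : p.-tuple 'I_k] | p <- iota 1 L].

Lemma mem_short_words L u : (0 < size u <= L)%N -> u \in short_words L.
Proof.
move=> uP; apply/flattenP; exists [seq val t | t : (size u).-tuple 'I_k].
  by apply/mapP; exists (size u) => //; rewrite mem_iota; lia.
by apply/mapP; exists (in_tuple u); rewrite ?mem_enum.
Qed.

Section Density.
Variable R : realType.

Definition occ_density w u s m : R := (occ_count w u s m)%:R / m%:R.

(* [freq] sees only the [m - size u + 1] starting positions whose occurrence fits in the block. *)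
Lemma dist_freq_density w u s m L : (s + m <= size w)%N ->
  (0 < size u <= L)%N -> (size u <= m)%N ->
  `|freq (R := R) (subword w s m) u - occ_density w u s m| <= 2 * L%:R / m%:R.
Proof.
move=> sm_le /andP[u_gt0 u_le_L] u_le_m; rewrite freq_subword //.
set q := (m - size u).+1; have q_le_m : (q <= m)%N by rewrite /q; lia.
have countE : occ_count w u s m = (occ_count w u s q + occ_count w u (s + q) (m - q))%N.
  by rewrite -occ_countD subnKC.
apply: le_trans (_ : 2 * (m%:R - q%:R) / m%:R <= _).
  apply: dist_ratio_prefix; rewrite ?ltr0n ?ler_nat // ?ler0n ?occ_count_le //=.
  by rewrite countE natrD addrAC subrr add0r ler0n -natrB // ler_nat occ_count_le.
rewrite ler_wpM2r ?invr_ge0 ?ler0n // ler_wpM2l // -natrB // ler_nat /q; lia.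
Qed.

Definition occ_energy w u s m : R := (occ_count w u s m)%:R ^+ 2 / m%:R.

Definition block_energy L w s m : R := \sum_(u <- short_words L) occ_energy w u s m.

Lemma block_energy_ge0 L w s m : 0 <= block_energy L w s m.
Proof. by apply: sumr_ge0 => u _; rewrite divr_ge0 ?sqr_ge0 ?ler0n. Qed.

Lemma block_energy_le L w s m : block_energy L w s m <= (size (short_words L))%:R * m%:R.
Proof.
have occ_energy_le u : occ_energy w u s m <= m%:R.
  have := occ_count_le w u s m; rewrite /occ_energy; case: m => [|m] count_le.
    by rewrite invr0 mulr0.
  by rewrite ler_pdivrMr ?ltr0n // expr2 ler_pM ?ler0n ?ler_nat.
rewrite /block_energy; elim: (short_words L) => [|u r IH]; first by rewrite big_nil mul0r.
by rewrite big_cons /= -natr1 mulrDl mul1r addrC lerD.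
Qed.

Lemma occ_energy_split_le w u s m i l : (i + l <= m)%N ->
  occ_energy w u s m <=
  occ_energy w u s i + occ_energy w u (s + i) l + occ_energy w u (s + i + l) (m - i - l).
Proof.
move=> il_le_m; have mE : m = (i + l + (m - i - l))%N by lia.
rewrite /occ_energy [in X in X <= _]mE occ_count3 !natrD.
by apply: sqr_div_add3_le; rewrite ler0n ler_nat occ_count_le.
Qed.

Lemma occ_energy_split_gain w u s m i l (eta : R) : (i + l <= m)%N -> (0 < l)%N -> 0 < eta ->
  eta * m%:R <= l%:R -> eta <= `|occ_density w u (s + i) l - occ_density w u s m| ->
  occ_energy w u s m + eta ^+ 3 * m%:R <=
  occ_energy w u s i + occ_energy w u (s + i) l + occ_energy w u (s + i + l) (m - i - l).
Proof.
move=> il_le_m l_gt0 eta_gt0 eta_le gap; have mE : m = (i + l + (m - i - l))%N by lia.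
rewrite /occ_density mE occ_count3 !natrD in eta_le gap.
rewrite /occ_energy [in X in X <= _]mE occ_count3 !natrD.
by apply: sqr_div_add3_gain; rewrite ?ltr0n ?ler0n ?ler_nat ?occ_count_le.
Qed.

Lemma block_energy_split_gain L w u s m i l (eta : R) :
  (i + l <= m)%N -> (0 < l)%N -> 0 < eta -> eta * m%:R <= l%:R ->
  u \in short_words L -> eta <= `|occ_density w u (s + i) l - occ_density w u s m| ->
  block_energy L w s m + eta ^+ 3 * m%:R <=
  block_energy L w s i + block_energy L w (s + i) l + block_energy L w (s + i + l) (m - i - l).
Proof.
move=> il_le_m l_gt0 eta_gt0 eta_le u_short gap.
pose D v := occ_energy w v s i + occ_energy w v (s + i) l +
  occ_energy w v (s + i + l) (m - i - l) - occ_energy w v s m.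
have : eta ^+ 3 * m%:R <= \sum_(v <- short_words L) D v.
  rewrite (big_rem u) //=; apply: le_trans (_ : D u <= _).
    by rewrite /D lerBrDl; apply: occ_energy_split_gain.
  by rewrite lerDl sumr_ge0 // => v _; rewrite subr_ge0 occ_energy_split_le.
by rewrite /D /block_energy sumrB !big_split /=; lra.
Qed.

Lemma not_regular_density_gap (eps : R) L w s m : 0 < eps ->
  8 * L%:R <= eps * m%:R -> 8 * L%:R <= eps ^+ 2 * m%:R -> (s + m <= size w)%N ->
  ~ regular eps L (subword w s m) -> exists i l u,
  [/\ (i + l <= m)%N, (0 < l)%N, eps * m%:R <= l%:R, (0 < size u <= L)%N &
      eps / 2 <= `|occ_density w u (s + i) l - occ_density w u s m|].
Proof.
move=> eps_gt0 long long2 sm_le irregular.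
have [i [l [u [il_le_m l_ge uP ul gap]]]] : exists i l u,
    [/\ (i + l <= m)%N, eps * m%:R <= l%:R, (0 < size u <= L)%N, (size u < l)%N &
        eps <= `|freq (R := R) (subword w s m) u -
                 freq (R := R) (subword (subword w s m) i l) u|].
  apply: contrapT => no_witness; apply: irregular => i l.
  rewrite size_subword // => il l_ge u uP ul.
  by rewrite ltNge; apply/negP => gap; apply: no_witness; exists i, l, u.
have [u_gt0 _] := andP uP; have l_gt0 : (0 < l)%N by lia.
have m_gt0 : 0 < m%:R :> R by rewrite ltr0n; lia.
have l_gt0R : 0 < l%:R :> R by rewrite ltr0n.
exists i, l, u; split => //; rewrite subword_subword // in gap.
have dist_m := @dist_freq_density w u s m L sm_le uP (_ : size u <= m)%N.
have dist_l := @dist_freq_density w u (s + i) l L (_ : s + i + l <= size w)%N uP (ltnW ul).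
rewrite distrC; apply: half_dist_ge gap (dist_m _) (dist_l _) _; try lia.
have : 2 * L%:R / m%:R <= eps / 4 by rewrite ler_pdivrMr //; lra.
have : 2 * L%:R / l%:R <= eps / 4.
  rewrite ler_pdivrMr //; have : eps * (eps * m%:R) <= eps * l%:R by rewrite ler_wpM2l // ltW.
  by rewrite mulrA -expr2; lra.
lra.
Qed.

Lemma irregular_block_energy_gain (eps : R) L w s m : 0 < eps ->
  8 * L%:R <= eps * m%:R -> 8 * L%:R <= eps ^+ 2 * m%:R -> (s + m <= size w)%N ->
  ~ regular eps L (subword w s m) -> exists i l, (i + l <= m)%N /\
  block_energy L w s m + (eps / 2) ^+ 3 * m%:R <=
  block_energy L w s i + block_energy L w (s + i) l + block_energy L w (s + i + l) (m - i - l).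
Proof.
move=> eps_gt0 long long2 sm_le irregular.
have [i [l [u [il_le_m l_gt0 l_ge uP gap]]]] :=
  @not_regular_density_gap eps L w s m eps_gt0 long long2 sm_le irregular.
exists i, l; split => //; apply: block_energy_split_gain gap => //.
- by rewrite divr_gt0.
- by apply: le_trans l_ge; rewrite ler_wpM2r ?ler0n // ler_pdivrMr //; lra.
- exact: mem_short_words.
Qed.

End Density.
End Occurrences.

Arguments block_energy {k R}.

Lemma exists_nat_mul_gt {R : realType} (b : R) {a : R} : 0 < a ->
  exists N : nat, forall n, (N <= n)%N -> b < a * n%:R.
Proof.
move=> a_gt0; have ba_ge0 : 0 <= `|b| / a by rewrite divr_ge0 // ltW.
exists (Num.Def.archi_bound (`|b| / a)) => n N_le_n.
have := archi_boundP ba_ge0; rewrite ltr_pdivrMr // => b_lt.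
apply: le_lt_trans (ler_norm b) (lt_le_trans b_lt _).
by rewrite mulrC ler_wpM2l ?ler_nat // ltW.
Qed.

Section Partition.
Variables (k : nat) (R : realType) (eps : R) (L S : nat) (w : seq 'I_k).

Fixpoint blocks s (P : seq nat) : seq (seq 'I_k) :=
  if P is m :: P' then subword w s m :: blocks (s + m)%N P' else [::].

Lemma flatten_blocks s P : flatten (blocks s P) = take (sumn P) (drop s w).
Proof.
elim: P s => [|m P IH] s /=; first by rewrite take0.
by rewrite IH takeD drop_drop (addnC m s).
Qed.

Lemma size_blocks s P : size (blocks s P) = size P.
Proof. by elim: P s => [|m P IH] s //=; rewrite IH. Qed.

Definition long_irregular s m : bool :=
  [&& (S <= m)%N, (s + m <= size w)%N & ~~ `[< regular eps L (subword w s m) >]].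

(* An irregular block not counted by [bad_mass] is shorter than [S]. *)
Lemma irregular_mass_blocks s P : (s + sumn P <= size w)%N ->
  (\sum_(v <- blocks s P | ~~ `[< regular eps L v >]) size v <=
   bad_mass long_irregular s P + S * size P)%N.
Proof.
elim: P s => [|m P IH] s /= sP_le; first by rewrite big_nil.
have sm_le : (s + m <= size w)%N by lia.
have := IH (s + m)%N; rewrite -addnA => /(_ sP_le); rewrite big_cons size_subword //.
rewrite /long_irregular; case: `[< regular eps L (subword w s m) >] => /=.
  by rewrite !andbF /=; lia.
by case: (leqP S m) => /= S_m; rewrite ?sm_le /=; lia.
Qed.

Lemma regular_partition_of_size t : 0 < eps ->
  8 * L%:R < eps * S%:R -> 8 * L%:R < eps ^+ 2 * S%:R ->
  (size (short_words k L))%:R < (eps / 2) ^+ 4 * t%:R ->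
  2 * (S * 3 ^ t)%:R <= eps * (size w)%:R ->
  exists ws : seq (seq 'I_k), [/\ flatten ws = w, (size ws <= 3 ^ t)%N &
    (\sum_(v <- ws | ~~ `[< regular eps L v >]) size v)%:R <= eps * (size w)%:R].
Proof.
move=> eps_gt0 long long2 rounds w_long.
have eta_gt0 : 0 < eps / 2 by rewrite divr_gt0.
have gain s m : long_irregular s m -> exists i l, (i + l <= m)%N /\
    block_energy L w s m + (eps / 2) ^+ 3 * m%:R <= block_energy L w s i +
    block_energy L w (s + i) l + block_energy L w (s + i + l) (m - i - l).
  move=> /and3P[S_le_m sm_le /asboolPn irregular].
  have S_m : S%:R <= m%:R :> R by rewrite ler_nat.
  apply: irregular_block_energy_gain => //.
    by apply: le_trans (ltW long) _; rewrite ler_wpM2l // ltW.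
  by apply: le_trans (ltW long2) _; rewrite ler_wpM2l // sqr_ge0.
have [|P [sumP sizeP small]] := @energy_increment R (block_energy L w) long_irregular _ _
  (ltW (exprn_gt0 3 eta_gt0)) (block_energy_ge0 k R L w) (block_energy_le k R L w) gain
  (eps / 2) (size w) t (ltW eta_gt0).
  by rewrite -mulrA -exprSr mulrC.
exists (blocks 0 P); split; first by rewrite flatten_blocks sumP drop0 take_size.
  by rewrite size_blocks.
have := irregular_mass_blocks 0 P; rewrite sumP => /(_ (leqnn _)).
rewrite -(ler_nat R) natrD => /le_trans; apply.
have : (S * size P)%:R <= (S * 3 ^ t)%:R :> R by rewrite ler_nat leq_mul2l sizeP orbT.
lra.
Qed.

End Partition.

Theorem lemma14 (R : realType) (eps : R) (k L : nat) :
  0 < eps -> (0 < k)%N -> (0 < L)%N ->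
  exists M : nat, exists N : nat, forall w : seq 'I_k, (N <= size w)%N ->
    exists ws : seq (seq 'I_k),
      [/\ flatten ws = w, (size ws <= M)%N &
          (\sum_(v <- ws | ~~ `[< regular eps L v >]) size v)%:R
            <= eps * (size w)%:R].
Proof.
move=> eps_gt0 _ _.
have [S1 long] := exists_nat_mul_gt (8 * L%:R) eps_gt0.
have [S2 long2] := exists_nat_mul_gt (8 * L%:R) (exprn_gt0 2 eps_gt0).
have [t rounds] := exists_nat_mul_gt (size (short_words k L))%:R
  (exprn_gt0 4 (divr_gt0 eps_gt0 (ltr0n R 2))).
pose S := maxn S1 S2.
have [N w_long] := exists_nat_mul_gt (2 * (S * 3 ^ t)%:R) eps_gt0.
exists (3 ^ t)%N, N => w N_le; apply: (@regular_partition_of_size k R eps L S w t eps_gt0).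
- exact: long (leq_maxl _ _).
- exact: long2 (leq_maxr _ _).
- exact: rounds t (leqnn t).
- exact: ltW (w_long _ N_le).
Qed.
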